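(* Let $X,Y$ be compact metric spaces, $\epsilon\ge0$, and let $X_\epsilon\subseteq X$, $Y_\epsilon\subseteq Y$ be $\epsilon$-nets of $X$ and $Y$ respectively. Then $|d_{\mathrm{GH}}(X,Y)-d_{\mathrm{GH}}(X_\epsilon,Y_\epsilon)|\le\epsilon$ and $|\widehat{d}_{\mathrm{GH}}(X,Y)-\widehat{d}_{\mathrm{GH}}(X_\epsilon,Y_\epsilon)|\le\epsilon$.
   Context: $X_\epsilon\subseteq X$ is an $\epsilon$-net of $X$ if every point of $X$ is within distance $\le\epsilon$ of some point of $X_\epsilon$ (the nets are taken so that they are compact, e.g. finite). For $f:X\to Y$, $\operatorname{dis}(f)=\sup_{x,x'}|d_X(x,x')-d_Y(f(x),f(x'))|$; $\operatorname{codis}(f,g)=\sup_{x,y}|d_X(x,g(y))-d_Y(f(x),y)|$. $d_{\mathrm{GH}}$ is the Gromov--Hausdorff distance, equal to $\frac12\inf_{f,g}\max\{\operatorname{dis}(f),\operatorname{dis}(g),\operatorname{codis}(f,g)\}$; the modified Gromov--Hausdorff distance is $\widehat{d}_{\mathrm{GH}}(X,Y)=\frac12\max\{\inf_{f:X\to Y}\operatorname{dis}(f),\inf_{g:Y\to X}\operatorname{dis}(g)\}$. *)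

From mathcomp Require Import all_boot all_order all_algebra.
From mathcomp Require Import all_classical all_reals.
From Stdlib Require List.
Set Implicit Arguments. Unset Strict Implicit. Unset Printing Implicit Defensive.
Import Order.TTheory GRing.Theory Num.Theory.
Local Open Scope classical_set_scope.
Local Open Scope ring_scope.

Definition is_metric {R : realType} {X : Type} (d : X -> X -> R) : Prop :=
  [/\ (forall x y, 0 <= d x y),
      (forall x y, d x y = 0 <-> x = y),
      (forall x y, d x y = d y x) &
      (forall x y z, d x z <= d x y + d y z)].

Definition metric_open {R : realType} {X : Type} (d : X -> X -> R) (U : set X) : Prop :=
  forall x, U x -> exists2 r : R, 0 < r & forall y, d x y < r -> U y.

Definition metric_compact {R : realType} {X : Type} (d : X -> X -> R) : Prop :=
  forall (I : Type) (U : I -> set X),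
    (forall i, metric_open d (U i)) -> (forall x, exists i, U i x) ->
    exists l : list I, forall x, exists i, List.In i l /\ U i x.

Definition subspace {X : Type} (A : set X) : Type := {x : X | A x}.
Definition sub_dist {R : realType} {X : Type} (d : X -> X -> R) (A : set X)
  (p q : subspace A) : R := d (proj1_sig p) (proj1_sig q).
Arguments sub_dist {R X} d A p q.

Definition is_eps_net {R : realType} {X : Type} (d : X -> X -> R) (eps : R)
  (A : set X) : Prop :=
  forall x, exists2 a, A a & d x a <= eps.

Definition dis {R : realType} {X Y : Type} (dX : X -> X -> R) (dY : Y -> Y -> R)
  (f : X -> Y) : R :=
  sup [set r | exists x x', r = `|dX x x' - dY (f x) (f x')|].

Definition codis {R : realType} {X Y : Type} (dX : X -> X -> R) (dY : Y -> Y -> R)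
  (f : X -> Y) (g : Y -> X) : R :=
  sup [set r | exists x y, r = `|dX x (g y) - dY (f x) y|].

(* Gromov--Hausdorff distance, via the distortion formula *)
Definition dGH {R : realType} {X Y : Type} (dX : X -> X -> R) (dY : Y -> Y -> R) : R :=
  2^-1 * inf [set r | exists (f : X -> Y) (g : Y -> X),
                 r = Num.max (dis dX dY f) (Num.max (dis dY dX g) (codis dX dY f g))].

Definition mdGH {R : realType} {X Y : Type} (dX : X -> X -> R) (dY : Y -> Y -> R) : R :=
  2^-1 * Num.max (inf [set r | exists f : X -> Y, r = dis dX dY f])
                 (inf [set r | exists g : Y -> X, r = dis dY dX g]).

From mathcomp Require Import all_boot all_order all_algebra.
From mathcomp Require Import all_classical all_reals.
From mathcomp Require Import lra.
From Stdlib Require List.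
Import Order.TTheory GRing.Theory Num.Theory.
Local Open Scope classical_set_scope.
Local Open Scope ring_scope.
Set Implicit Arguments. Unset Strict Implicit.

(** Choose a retraction [p : X -> X_eps] with [d(x, p x) <= eps] and let [i] be
    the inclusion [X_eps -> X]; likewise for [Y].  Composing with these maps turns
    maps between the nets into maps between the spaces and conversely, and by the
    triangle inequality every distortion and codistortion grows by at most [2 eps]:
    [p] distorts distances by at most [2 eps], [i] not at all, and the pair [(p, i)]
    has codistortion at most [eps].  Taking infima bounds each distance by the other
    plus [eps].  Compactness only serves to bound the metrics, so that the suprema
    defining distortions are not junk values. *)

Definition dist_bounded {R : realType} {X : Type} (d : X -> X -> R) (M : R) :=
  forall x y, `|d x y| <= M.

Lemma ler_dist_chain (R : realDomainType) (u u' v v' a b c : R) :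
  `|u - u'| <= a -> `|u' - v'| <= b -> `|v' - v| <= c -> `|u - v| <= b + (a + c).
Proof.
rewrite !ler_norml => /andP[? ?] /andP[? ?] /andP[? ?].
by apply/andP; split; lra.
Qed.

Lemma inf_le_add_inf (R : realType) (S T : set R) (c : R) :
  has_lbound S -> T !=set0 -> (forall t, T t -> exists2 s, S s & s <= t + c) ->
  inf S <= inf T + c.
Proof.
move=> lbS neT ST; rewrite -lerBlDr; apply: lb_le_inf => // t Tt.
have [s Ss le_st] := ST t Tt; rewrite lerBlDr.
exact: le_trans (ge_inf lbS Ss) le_st.
Qed.

Section Sup2.
Variables (R : realType) (T U : Type) (H : T -> U -> R).

Lemma le_sup2 (M : R) : (forall x y, H x y <= M) ->
  forall x y, H x y <= sup [set r | exists x y, r = H x y].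
Proof.
move=> HM x y; apply: ub_le_sup; last by exists x, y.
by exists M => _ [a [b ->]].
Qed.

Lemma sup2_le (x0 : T) (y0 : U) (c : R) : (forall x y, H x y <= c) ->
  sup [set r | exists x y, r = H x y] <= c.
Proof. by move=> Hc; apply: ge_sup; [exists (H x0 y0), x0, y0 | move=> _ [x [y ->]]]. Qed.

End Sup2.

Section Metric.
Variables (R : realType) (X : Type) (d : X -> X -> R).
Hypothesis d_metric : is_metric d.

Lemma dist_self x : d x x = 0.
Proof. by case: d_metric => _ d0 _ _; apply/d0. Qed.

Lemma dist_sym x y : d x y = d y x.
Proof. by case: d_metric. Qed.

Lemma ler_dist_diff x y x' y' : `|d x y - d x' y'| <= d x x' + d y y'.
Proof.
case: d_metric => _ _ dC dxyz.
have := dxyz x x' y; have := dxyz x' y' y; have := dxyz x' x y'; have := dxyz x y y'.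
rewrite (dC y' y) (dC x x') => *.
by rewrite ler_norml; apply/andP; split; lra.
Qed.

Lemma metric_compact_finite_net (r : R) : metric_compact d -> 0 < r ->
  exists l : list X, forall x, exists c, List.In c l /\ d c x < r.
Proof.
case: d_metric => _ d0 _ dxyz cpt r_gt0.
apply: (cpt X (fun c => [set y | d c y < r])) => [c y /= cy|x].
  exists (r - d c y) => [|z yz]; first lra.
  by have := dxyz c y z; rewrite /=; lra.
by exists x; rewrite /= (proj2 (d0 x x)).
Qed.

Lemma dist_list_bounded (x0 : X) (l : list X) :
  exists K, forall c, List.In c l -> d x0 c <= K.
Proof.
elim: l => [|a l [K leK]]; first by exists 0.
exists (Num.max (d x0 a) K) => c [<-|/leK]; rewrite le_max ?lexx //.
by move=> ->; rewrite orbT.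
Qed.

Lemma metric_compact_bounded : metric_compact d -> inhabited X ->
  exists M, dist_bounded d M.
Proof.
move=> cpt [x0].
have [l near_l] := metric_compact_finite_net cpt ltr01.
have [K leK] := dist_list_bounded x0 l.
case: d_metric => d_ge0 _ dC dxyz.
exists (2 * K + 2) => x y; rewrite ger0_norm; last exact: d_ge0.
have [c [lc xc]] := near_l x; have [c' [lc' yc']] := near_l y.
have := leK c lc; have := leK c' lc'.
have := dxyz x c y; have := dxyz c x0 y; have := dxyz x0 c' y.
by rewrite (dC x c) (dC c x0); lra.
Qed.

End Metric.

Lemma eps_net_retraction (R : realType) (X : Type) (d : X -> X -> R) (eps : R)
    (A : set X) :
  is_eps_net d eps A -> exists p : X -> subspace A, forall x, d x (proj1_sig (p x)) <= eps.
Proof.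
move=> netA.
have /choice[p near_p] : forall x, exists a : subspace A, d x (proj1_sig a) <= eps.
  by move=> x; case: (netA x) => a Aa xa; exists (exist _ a Aa).
by exists p.
Qed.

Section Distortion.
Variables (R : realType) (A B : Type) (dA : A -> A -> R) (dB : B -> B -> R).

Lemma dis_le (a0 : A) (f : A -> B) (c : R) :
  (forall x x', `|dA x x' - dB (f x) (f x')| <= c) -> dis dA dB f <= c.
Proof. exact: sup2_le. Qed.

Lemma codis_le (a0 : A) (b0 : B) (f : A -> B) (g : B -> A) (c : R) :
  (forall x y, `|dA x (g y) - dB (f x) y| <= c) -> codis dA dB f g <= c.
Proof. exact: sup2_le. Qed.

Variables (MA MB : R).
Hypotheses (bA : dist_bounded dA MA) (bB : dist_bounded dB MB).

Lemma dis_ub (f : A -> B) x x' : `|dA x x' - dB (f x) (f x')| <= dis dA dB f.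
Proof.
apply: (le_sup2 (H := fun x x' => `|dA x x' - dB (f x) (f x')|) (M := MA + MB)).
move=> {}x {}x'.
exact: le_trans (ler_normB _ _) (lerD (bA _ _) (bB _ _)).
Qed.

Lemma codis_ub (f : A -> B) (g : B -> A) x y :
  `|dA x (g y) - dB (f x) y| <= codis dA dB f g.
Proof.
apply: (le_sup2 (H := fun x y => `|dA x (g y) - dB (f x) y|) (M := MA + MB)).
move=> {}x {}y.
exact: le_trans (ler_normB _ _) (lerD (bA _ _) (bB _ _)).
Qed.

Lemma dis_ge0 (a0 : A) (f : A -> B) : 0 <= dis dA dB f.
Proof. exact: le_trans (normr_ge0 _) (dis_ub f a0 a0). Qed.

End Distortion.

Section Composition.
Variables (R : realType) (A A' B B' : Type).
Variables (dA : A -> A -> R) (dA' : A' -> A' -> R) (dB : B -> B -> R) (dB' : B' -> B' -> R).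
Variables (MA' MB' : R).
Hypotheses (bA' : dist_bounded dA' MA') (bB' : dist_bounded dB' MB').

Lemma dis_comp (a0 : A) (p : A -> A') (q : B' -> B) (e1 e2 : R) :
  (forall x x', `|dA x x' - dA' (p x) (p x')| <= e1) ->
  (forall y y', `|dB' y y' - dB (q y) (q y')| <= e2) ->
  forall f, dis dA dB (q \o f \o p) <= dis dA' dB' f + (e1 + e2).
Proof.
move=> p_e1 q_e2 f; apply: (dis_le a0) => x x' /=.
exact: ler_dist_chain (p_e1 x x') (dis_ub bA' bB' f _ _) (q_e2 _ _).
Qed.

Lemma codis_comp (a0 : A) (b0 : B) (p : A -> A') (p' : A' -> A) (q : B' -> B)
    (q' : B -> B') (e1 e2 : R) :
  (forall x x', `|dA x (p' x') - dA' (p x) x'| <= e1) ->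
  (forall y' y, `|dB' y' (q' y) - dB (q y') y| <= e2) ->
  forall f g, codis dA dB (q \o f \o p) (p' \o g \o q') <= codis dA' dB' f g + (e1 + e2).
Proof.
move=> p_e1 q_e2 f g; apply: (codis_le a0 b0) => x y /=.
exact: ler_dist_chain (p_e1 x _) (codis_ub bA' bB' f g _ _) (q_e2 _ y).
Qed.

End Composition.

Section Retraction.
Variables (R : realType) (A A' : Type) (dA : A -> A -> R) (dA' : A' -> A' -> R).
Hypothesis dA_metric : is_metric dA.
Variables (i : A' -> A) (p : A -> A') (eps : R).
Hypotheses (i_isometry : forall x y, dA (i x) (i y) = dA' x y)
  (p_near : forall x, dA x (i (p x)) <= eps).

Lemma isometry_bounded (M : R) : dist_bounded dA M -> dist_bounded dA' M.
Proof. by move=> bA x y; rewrite -i_isometry. Qed.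

Lemma dist_isometry x y : `|dA' x y - dA (i x) (i y)| <= 0.
Proof. by rewrite i_isometry subrr normr0. Qed.

Lemma dist_retraction x y : `|dA x y - dA' (p x) (p y)| <= 2 * eps.
Proof.
rewrite -i_isometry; apply: le_trans (ler_dist_diff dA_metric _ _ _ _) _.
by have := p_near x; have := p_near y; lra.
Qed.

Lemma dist_embed_retract x x' : `|dA x (i x') - dA' (p x) x'| <= eps.
Proof.
rewrite -i_isometry; apply: le_trans (ler_dist_diff dA_metric _ _ _ _) _.
by rewrite dist_self // addr0.
Qed.

Lemma dist_retract_embed x' x : `|dA' x' (p x) - dA (i x') x| <= eps.
Proof.
rewrite -i_isometry; apply: le_trans (ler_dist_diff dA_metric _ _ _ _) _.
by rewrite dist_self // add0r dist_sym.
Qed.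

End Retraction.

Lemma inf_dis_le_transfer (R : realType) (C D C' D' : Type) (dC : C -> C -> R) (dD : D -> D -> R)
    (dC' : C' -> C' -> R) (dD' : D' -> D' -> R) (MC MD c : R) (c0 : C) (d0' : D')
    (H : (C' -> D') -> C -> D) :
  dist_bounded dC MC -> dist_bounded dD MD ->
  (forall h, dis dC dD (H h) <= dis dC' dD' h + c) ->
  inf [set r | exists h : C -> D, r = dis dC dD h]
    <= inf [set r | exists h : C' -> D', r = dis dC' dD' h] + c.
Proof.
move=> bC bD dis_H; apply: inf_le_add_inf.
- by exists 0 => _ [h ->]; exact: dis_ge0 bC bD c0 h.
- by exists (dis dC' dD' (fun _ => d0')), (fun _ => d0').
- by move=> _ [h ->]; exists (dis dC dD (H h)); [exists (H h) | exact: dis_H].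
Qed.

Section GHTransfer.
Variables (R : realType) (A B A' B' : Type).
Variables (dA : A -> A -> R) (dA' : A' -> A' -> R) (dB : B -> B -> R) (dB' : B' -> B' -> R).
Variables (MA MB : R) (a0 : A) (b0 : B) (a0' : A') (b0' : B').
Hypotheses (bA : dist_bounded dA MA) (bB : dist_bounded dB MB).
Variables (F : (A' -> B') -> A -> B) (G : (B' -> A') -> B -> A) (e : R).
Hypotheses (dis_F : forall f, dis dA dB (F f) <= dis dA' dB' f + 2 * e)
  (dis_G : forall g, dis dB dA (G g) <= dis dB' dA' g + 2 * e).

Lemma mdGH_le_transfer : mdGH dA dB <= mdGH dA' dB' + e.
Proof.
have infAB := inf_dis_le_transfer a0 b0' bA bB dis_F.
have infBA := inf_dis_le_transfer b0 a0' bB bA dis_G.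
have := le_max2 infAB infBA; rewrite -addr_maxl /mdGH; lra.
Qed.

Lemma dGH_le_transfer :
  (forall f g, codis dA dB (F f) (G g) <= codis dA' dB' f g + 2 * e) ->
  dGH dA dB <= dGH dA' dB' + e.
Proof.
move=> codis_FG; rewrite /dGH.
set S := [set r | exists f g, r = _]; set T := [set r | exists f g, r = _].
suff : inf S <= inf T + 2 * e by lra.
apply: inf_le_add_inf.
- exists 0 => _ [f [g ->]].
  by rewrite le_max (dis_ge0 bA bB a0).
- by eexists; exists (fun _ => b0'), (fun _ => a0').
- move=> _ [f [g ->]]; eexists; first by exists (F f), (G g).
  by rewrite !addr_maxl; apply: le_max2 (dis_F f) (le_max2 (dis_G g) (codis_FG f g)).
Qed.

End GHTransfer.

Section NetTransfer.
Variables (R : realType) (A A' B B' : Type).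
Variables (dA : A -> A -> R) (dA' : A' -> A' -> R) (dB : B -> B -> R) (dB' : B' -> B' -> R).
Hypotheses (dA_metric : is_metric dA) (dB_metric : is_metric dB).
Variables (MA MB : R) (a0 : A) (b0 : B).
Hypotheses (bA : dist_bounded dA MA) (bB : dist_bounded dB MB).
Variables (iA : A' -> A) (pA : A -> A') (iB : B' -> B) (pB : B -> B') (eps : R).
Hypotheses (iA_isometry : forall x y, dA (iA x) (iA y) = dA' x y)
  (iB_isometry : forall x y, dB (iB x) (iB y) = dB' x y)
  (pA_near : forall x, dA x (iA (pA x)) <= eps)
  (pB_near : forall y, dB y (iB (pB y)) <= eps).

Let bA' := isometry_bounded iA_isometry bA.
Let bB' := isometry_bounded iB_isometry bB.

Lemma dis_lift (f : A' -> B') : dis dA dB (iB \o f \o pA) <= dis dA' dB' f + 2 * eps.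
Proof.
apply: le_trans (dis_comp bA' bB' a0 (dist_retraction dA_metric iA_isometry pA_near)
  (dist_isometry iB_isometry) f) _.
by rewrite addr0.
Qed.

Lemma dis_restrict (f : A -> B) : dis dA' dB' (pB \o f \o iA) <= dis dA dB f + 2 * eps.
Proof.
apply: le_trans (dis_comp bA bB (pA a0) (dist_isometry iA_isometry)
  (dist_retraction dB_metric iB_isometry pB_near) f) _.
by rewrite add0r.
Qed.

Lemma codis_lift (f : A' -> B') (g : B' -> A') :
  codis dA dB (iB \o f \o pA) (iA \o g \o pB) <= codis dA' dB' f g + 2 * eps.
Proof.
apply: le_trans (codis_comp bA' bB' a0 b0 (dist_embed_retract dA_metric iA_isometry pA_near)
  (dist_retract_embed dB_metric iB_isometry pB_near) f g) _.
lra.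
Qed.

Lemma codis_restrict (f : A -> B) (g : B -> A) :
  codis dA' dB' (pB \o f \o iA) (pA \o g \o iB) <= codis dA dB f g + 2 * eps.
Proof.
apply: le_trans (codis_comp bA bB (pA a0) (pB b0)
  (dist_retract_embed dA_metric iA_isometry pA_near)
  (dist_embed_retract dB_metric iB_isometry pB_near) f g) _.
lra.
Qed.

End NetTransfer.

Section NetGH.
Variables (R : realType) (A A' B B' : Type).
Variables (dA : A -> A -> R) (dA' : A' -> A' -> R) (dB : B -> B -> R) (dB' : B' -> B' -> R).
Hypotheses (dA_metric : is_metric dA) (dB_metric : is_metric dB).
Variables (MA MB : R) (a0 : A) (b0 : B).
Hypotheses (bA : dist_bounded dA MA) (bB : dist_bounded dB MB).
Variables (iA : A' -> A) (pA : A -> A') (iB : B' -> B) (pB : B -> B') (eps : R).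
Hypotheses (iA_isometry : forall x y, dA (iA x) (iA y) = dA' x y)
  (iB_isometry : forall x y, dB (iB x) (iB y) = dB' x y)
  (pA_near : forall x, dA x (iA (pA x)) <= eps)
  (pB_near : forall y, dB y (iB (pB y)) <= eps).

Let bA' := isometry_bounded iA_isometry bA.
Let bB' := isometry_bounded iB_isometry bB.

Let dis_lift_AB := dis_lift dA_metric a0 bA bB iA_isometry iB_isometry pA_near.
Let dis_lift_BA := dis_lift dB_metric b0 bB bA iB_isometry iA_isometry pB_near.
Let dis_restrict_AB := dis_restrict dB_metric a0 bA bB pA iA_isometry iB_isometry pB_near.
Let dis_restrict_BA := dis_restrict dA_metric b0 bB bA pB iB_isometry iA_isometry pA_near.

Lemma dGH_le_lift : dGH dA dB <= dGH dA' dB' + eps.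
Proof.
exact (dGH_le_transfer a0 (pA a0) (pB b0) bA bB dis_lift_AB dis_lift_BA
  (codis_lift dA_metric dB_metric a0 b0 bA bB iA_isometry iB_isometry pA_near pB_near)).
Qed.

Lemma dGH_le_restrict : dGH dA' dB' <= dGH dA dB + eps.
Proof.
exact (dGH_le_transfer (pA a0) a0 b0 bA' bB' dis_restrict_AB dis_restrict_BA
  (codis_restrict dA_metric dB_metric a0 b0 bA bB iA_isometry iB_isometry pA_near pB_near)).
Qed.

Lemma mdGH_le_lift : mdGH dA dB <= mdGH dA' dB' + eps.
Proof. exact (mdGH_le_transfer a0 b0 (pA a0) (pB b0) bA bB dis_lift_AB dis_lift_BA). Qed.

Lemma mdGH_le_restrict : mdGH dA' dB' <= mdGH dA dB + eps.
Proof.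
exact (mdGH_le_transfer (pA a0) (pB b0) a0 b0 bA' bB' dis_restrict_AB dis_restrict_BA).
Qed.

End NetGH.

Theorem claim2 (R : realType)
  (X : Type) (dX : X -> X -> R) (Y : Type) (dY : Y -> Y -> R)
  (hX : is_metric dX) (hY : is_metric dY)
  (cX : metric_compact dX) (cY : metric_compact dY)
  (neX : inhabited X) (neY : inhabited Y)
  (eps : R) (heps : 0 <= eps)
  (Xe : set X) (Ye : set Y)
  (netX : is_eps_net dX eps Xe) (netY : is_eps_net dY eps Ye)
  (cXe : metric_compact (sub_dist dX Xe)) (cYe : metric_compact (sub_dist dY Ye)) :
  `| dGH dX dY - dGH (sub_dist dX Xe) (sub_dist dY Ye) | <= eps /\
  `| mdGH dX dY - mdGH (sub_dist dX Xe) (sub_dist dY Ye) | <= eps.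
Proof.
have [MX bX] := metric_compact_bounded hX cX neX.
have [MY bY] := metric_compact_bounded hY cY neY.
have [pX pX_near] := eps_net_retraction netX.
have [pY pY_near] := eps_net_retraction netY.
have [[x0] [y0]] := (neX, neY).
have iX_isometry : forall a b, dX (proj1_sig a) (proj1_sig b) = sub_dist dX Xe a b by [].
have iY_isometry : forall a b, dY (proj1_sig a) (proj1_sig b) = sub_dist dY Ye a b by [].
have := dGH_le_lift hX hY x0 y0 bX bY iX_isometry iY_isometry pX_near pY_near.
have := dGH_le_restrict hX hY x0 y0 bX bY iX_isometry iY_isometry pX_near pY_near.
have := mdGH_le_lift hX hY x0 y0 bX bY iX_isometry iY_isometry pX_near pY_near.
have := mdGH_le_restrict hX hY x0 y0 bX bY iX_isometry iY_isometry pX_near pY_near.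
by rewrite !ler_norml => *; split; apply/andP; split; lra.
Qed.
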